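(* Let $d\ge 2$ and let $\varphi:[0,\infty)\to[0,1]$ be the Laplace transform of a strictly positive random variable, continuous and strictly decreasing with $\varphi(0)=1$ and $\lim_{t\to\infty}\varphi(t)=0$, and let $C(u_1,\dots,u_d)=\varphi\big(\sum_{i=1}^d\varphi^{-1}(u_i)\big)$ be the associated Archimedean copula. Suppose $\varphi\in\Gamma_\alpha(g)$ for some $\alpha>0$ and some positive measurable function $g$ that is ultimately decreasing. Suppose moreover that for some $k$ with $1\le k\le d$, $$\lim_{t\to\infty}\frac{\varphi(td)}{\varphi(t)^k}=\tau\in(0,\infty).$$ Then for every $w=(w_1,\dots,w_d)\in\mathbb{R}_+^d$, $$\lim_{u\downarrow 0}\frac{C(uw_1,\dots,uw_d)}{u^k}=\tau\prod_{i=1}^d w_i^{k/d}.$$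
   Context: For $\alpha\ge0$ and a positive measurable function $g$, the class $\Gamma_\alpha(g)$ consists of the measurable functions $f$ such that $\lim_{t\to\infty} f(t+xg(t))/f(t)=e^{-\alpha x}$ for all $x\in\mathbb{R}$. (For $f\in\Gamma_\alpha(g)$ the function $g$ is then self-neglecting: $g(t)/t\to0$ and $g(t+xg(t))/g(t)\to1$ locally uniformly in $x\in\mathbb{R}$.) ''Ultimately decreasing'' means non-increasing on $[t_0,\infty)$ for some $t_0$. *)

From HB Require Import structures.
From mathcomp Require Import all_boot all_order all_algebra.
From mathcomp Require Import all_classical all_reals all_analysis.
Set Implicit Arguments. Unset Strict Implicit. Unset Printing Implicit Defensive.
Import Order.TTheory GRing.Theory Num.Theory.
Import numFieldNormedType.Exports.
Local Open Scope classical_set_scope.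
Local Open Scope ring_scope.

Definition Gamma_class (R : realType) (alpha : R) (g f : R -> R) : Prop :=
  measurable_fun (`[0, +oo[%classic : set R) f /\
  forall x : R, (f (t + x * g t) / f t) @[t --> +oo] --> expR (- (alpha * x)).

Definition ult_decreasing (R : realType) (g : R -> R) : Prop :=
  exists t0 : R, forall s t, t0 <= s -> s <= t -> g t <= g s.

Definition laplace_transform_pos (R : realType) (phi : R -> R) : Prop :=
  exists P : probability R R, P (`]0, +oo[%classic : set R) = 1%E /\
    forall t : R, 0 <= t -> (phi t)%:E = (\int[P]_x (expR (- (t * x)))%:E)%E.

Definition arch_inv (R : realType) (phi : R -> R) (u : R) : R :=
  xget 0 [set t | 0 <= t /\ phi t = u].

(* Archimedean copula; C(u) = 0 as soon as some u_i = 0 (phi^{-1}(0) = +oo) *)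
Definition arch_copula (R : realType) (d : nat) (phi : R -> R) (v : 'I_d -> R) : R :=
  if `[< forall i, 0 < v i >] then phi (\sum_(i < d) arch_inv phi (v i)) else 0.

From HB Require Import structures.
From mathcomp Require Import all_boot all_order all_algebra.
From mathcomp Require Import all_classical all_reals all_analysis.
From mathcomp Require Import lra ring.
Import Order.TTheory GRing.Theory Num.Theory.
Import numFieldNormedType.Exports.
Local Open Scope classical_set_scope.
Local Open Scope ring_scope.

(* Write psi for the inverse of phi and t = psi u, so that u = phi t.  Inverting
   the Gamma_alpha limit gives psi (u w_i) = t + (- ln w_i / alpha + o(1)) g(t), so
   the mean m of the psi (u w_i) is t + (x0 + o(1)) g(t), with x0 the mean of the
   - ln w_i / alpha.  Because phi is monotone, the Gamma_alpha limit holds locally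
   uniformly in x, hence phi m / u -> exp (- alpha x0) = prod_i w_i ^ (1/d).  Since
   C(u w) = phi (d m), we get
     C(u w) / u ^ k = (phi (d m) / phi m ^ k) * (phi m / u) ^ k -> tau prod_i w_i ^ (k/d).
   A zero weight makes the copula vanish identically. *)

Lemma cvg_powR {R : realType} {T : Type} {F : set_system T} {FF : Filter F}
    (f : T -> R) (c p : R) :
  0 < c -> f @ F --> c -> f x `^ p @[x --> F] --> c `^ p.
Proof.
move=> c_gt0 fc.
have powR_cont : {for c, continuous (fun a : R => a `^ p)}.
  apply/differentiable_continuous/derivable1_diffP.
  by apply: derivable_powR; rewrite in_itv /= c_gt0.
exact: (continuous_cvg _ powR_cont fc).
Qed.

Lemma prod_powR (R : realType) (I : finType) (a : I -> R) (p : R) :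
  (forall i, 0 <= a i) -> (\prod_i a i) `^ p = \prod_i a i `^ p.
Proof.
move=> a_ge0.
suff [] : 0 <= \prod_i a i /\ (\prod_i a i) `^ p = \prod_i a i `^ p by [].
elim/big_rec2: _ => [|i x y _ [x_ge0 <-]]; first by rewrite powR1.
by rewrite mulr_ge0 // powRM.
Qed.

Section ArchimedeanGenerator.
Variables (R : realType) (phi : R -> R).
Hypothesis phi_cont : {within `[0, +oo[, continuous phi}.
Hypothesis phi0 : phi 0 = 1.
Hypothesis phi_cvgy : phi t @[t --> +oo] --> 0.

Lemma arch_inv_ge0 (v : R) : 0 <= arch_inv phi v.
Proof. by rewrite /arch_inv; case: xgetP => [x _ [] | _]. Qed.

Lemma arch_invK (v : R) : 0 < v <= 1 -> phi (arch_inv phi v) = v.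
Proof.
case/andP => v_gt0 v_le1.
suff : 0 <= arch_inv phi v /\ phi (arch_inv phi v) = v by case.
apply: (@xgetPex _ 0 (fun t => 0 <= t /\ phi t = v)).
have [M [M_ge0 phiM_lt]] : exists M, 0 <= M /\ phi M < v.
  have [M [_ phiM]] := cvgr_lt _ phi_cvgy _ v_gt0.
  exists (Num.max M 0 + 1); split; first by rewrite addr_ge0 // le_max lexx orbT.
  apply: phiM; have : M <= Num.max M 0 by rewrite le_max lexx.
  by rewrite /=; lra.
have phi_contM : {within `[0, M], continuous phi}.
  by apply: continuous_subspaceW phi_cont => x /=; rewrite !in_itv /= => /andP[-> _].
have [|c] := IVT M_ge0 phi_contM (v := v).
  by rewrite phi0 ge_min (ltW phiM_lt) orbT /= le_max v_le1.
by rewrite in_itv /= => /andP[c_ge0 _] phic; exists c.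
Qed.

Lemma arch_invK_scaled (c : R) : 0 < c ->
  \forall u \near 0^'+, phi (arch_inv phi (u * c)) = u * c.
Proof.
move=> c_gt0; near=> u; apply: arch_invK.
have u_gt0 : 0 < u by near: u; apply: nbhs_right_gt.
have u_lt : u < c^-1 by near: u; apply: nbhs_right_lt; rewrite invr_gt0.
by rewrite mulr_gt0 //= -ler_pdivlMr // div1r ltW.
Unshelve. all: by end_near. Qed.

Lemma arch_invK_at0 : \forall u \near 0^'+, phi (arch_inv phi u) = u.
Proof.
by near=> u; rewrite -[u]mulr1; near: u; exact: arch_invK_scaled.
Unshelve. all: by end_near. Qed.

Hypothesis phi_nonincr : forall s t : R, 0 <= s -> s <= t -> phi t <= phi s.
Hypothesis phi_gt0 : forall t : R, 0 <= t -> 0 < phi t.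

Lemma arch_inv_cvgy {T : Type} {F : set_system T} {FF : Filter F} (v : T -> R) :
  v x @[x --> F] --> 0 -> (\forall x \near F, 0 < v x) ->
  arch_inv phi (v x) @[x --> F] --> +oo.
Proof.
move=> v_cvg0 v_gt0; apply/cvgryPge => A.
set M := Num.max A 0.
have M_ge0 : 0 <= M by rewrite le_max lexx orbT.
have phiM_le1 : phi M <= 1 by rewrite -phi0 phi_nonincr.
near=> x.
have vx_lt : v x < phi M by near: x; exact: cvgr_lt 0 v_cvg0 _ (phi_gt0 _ M_ge0).
have vx_gt0 : 0 < v x by near: x.
apply: le_trans (_ : M <= _); first by rewrite le_max lexx.
rewrite leNgt; apply/negP => inv_lt.
have := phi_nonincr _ _ (arch_inv_ge0 (v x)) (ltW inv_lt).
by rewrite arch_invK ?vx_gt0 ?(ltW (lt_le_trans vx_lt phiM_le1)) // leNgt vx_lt.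
Unshelve. all: by end_near. Qed.

Lemma arch_inv_at0_cvgy : arch_inv phi u @[u --> 0^'+] --> +oo.
Proof.
apply: arch_inv_cvgy; last exact: nbhs_right_gt.
exact: (@cvg_at_right_filter _ _ id).
Qed.

Lemma arch_inv_scaled_cvgy (c : R) : 0 < c ->
  arch_inv phi (u * c) @[u --> 0^'+] --> +oo.
Proof.
move=> c_gt0; apply: arch_inv_cvgy; last first.
  by near=> u; rewrite mulr_gt0 //; near: u; apply: nbhs_right_gt.
rewrite -[X in _ --> X](mul0r c); apply: cvgM; last exact: cvg_cst.
exact: (@cvg_at_right_filter _ _ id).
Unshelve. all: by end_near. Qed.

Variables (g : R -> R) (alpha t0 G : R).
Hypothesis t0_ge0 : 0 <= t0.
Hypothesis g_gt0 : forall t : R, 0 <= t -> 0 < g t.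
Hypothesis g_le : forall t : R, t0 <= t -> g t <= G.
Hypothesis phi_Gamma :
  forall x, (phi (t + x * g t) / phi t) @[t --> +oo] --> expR (- (alpha * x)).

Lemma Gamma_shift_ge0 (K t x : R) : t0 + K * G <= t -> `|x| <= K -> 0 <= t + x * g t.
Proof.
move=> t_ge x_le.
have G_gt0 : 0 < G by apply: lt_le_trans (g_gt0 _ t0_ge0) (g_le _ (lexx t0)).
have K_ge0 : 0 <= K := le_trans (normr_ge0 x) x_le.
have t_ge0 : t0 <= t by apply: le_trans t_ge; rewrite lerDl mulr_ge0 // ltW.
have gt_gt0 : 0 < g t by apply: g_gt0; apply: le_trans t_ge0.
have xg_ge : - (`|x| * g t) <= x * g t.
  rewrite -mulNr; apply: ler_wpM2r; first exact: ltW.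
  by move: (lexx `|x|); rewrite ler_norml => /andP[].
have xg_le : `|x| * g t <= K * G by apply: ler_pM => //; [exact: ltW | exact: g_le].
have t_geKG : K * G <= t by rewrite (le_trans _ t_ge) // lerDr.
lra.
Qed.

Lemma Gamma_ratio_nonincr (K t x y : R) :
  t0 + K * G <= t -> `|x| <= K -> x <= y ->
  phi (t + y * g t) / phi t <= phi (t + x * g t) / phi t.
Proof.
move=> t_ge x_le xy.
have G_gt0 : 0 < G by apply: lt_le_trans (g_gt0 _ t0_ge0) (g_le _ (lexx t0)).
have K_ge0 : 0 <= K := le_trans (normr_ge0 x) x_le.
have t_ge0 : 0 <= t by apply: le_trans t_ge; rewrite addr_ge0 // mulr_ge0 // ltW.
apply: ler_wpM2r; first by rewrite invr_ge0 ltW ?phi_gt0.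
apply: phi_nonincr; first exact: Gamma_shift_ge0 _ _ _ t_ge x_le.
by rewrite lerD2l; apply: ler_wpM2r => //; rewrite ltW ?g_gt0.
Qed.

Lemma Gamma_cvg_comp {T : Type} {F : set_system T} {FF : Filter F}
    (tt xx : T -> R) (x0 : R) :
  tt @ F --> +oo -> xx @ F --> x0 ->
  phi (tt u + xx u * g (tt u)) / phi (tt u) @[u --> F] --> expR (- (alpha * x0)).
Proof.
(* The Gamma limits at the fixed points x0 +- de/2 squeeze the ratio at xx u,
   since phi is monotone. *)
move=> tt_cvgy xx_cvg; apply/cvgrPdist_lt => e e_gt0.
have e2_gt0 : 0 < e / 2 by rewrite divr_gt0.
have L_cont : (fun x => expR (- (alpha * x))) @ x0 --> expR (- (alpha * x0)).
  apply: continuous_comp; last exact: continuous_expR.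
  by apply: continuousN; apply: continuousM; [exact: cvg_cst | exact: cvg_id].
have /cvgrPdist_lt/(_ _ e2_gt0)/nbhs_ballP[de /= de_gt0 L_near] := L_cont.
have de2_gt0 : 0 < de / 2 by rewrite divr_gt0.
have de2_lt : de / 2 < de by lra.
set a := x0 + de / 2; set b := x0 - de / 2; set K := `|x0| + de.
have La : `|expR (- (alpha * x0)) - expR (- (alpha * a))| < e / 2.
  by apply: L_near; rewrite /ball /= /a opprD addrA subrr add0r normrN gtr0_norm.
have Lb : `|expR (- (alpha * x0)) - expR (- (alpha * b))| < e / 2.
  by apply: L_near; rewrite /ball /= /b opprB addrC subrK gtr0_norm.
have /cvgrPdist_lt/(_ _ e2_gt0)/tt_cvgy Ga := phi_Gamma a.
have /cvgrPdist_lt/(_ _ e2_gt0)/tt_cvgy Gb := phi_Gamma b.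
near=> u.
have t_ge : t0 + K * G <= tt u by near: u; move/cvgryPge : tt_cvgy; apply.
have /ltr_normlP[xx_lb xx_ub] : `|x0 - xx u| < de / 2.
  by near: u; move/cvgrPdist_lt : xx_cvg; apply.
have /ltr_normlP[Ga_lb Ga_ub] :
    `|expR (- (alpha * a)) - phi (tt u + a * g (tt u)) / phi (tt u)| < e / 2.
  by near: u.
have /ltr_normlP[Gb_lb Gb_ub] :
    `|expR (- (alpha * b)) - phi (tt u + b * g (tt u)) / phi (tt u)| < e / 2.
  by near: u.
have K_ge : forall x, `|x0 - x| <= de -> `|x| <= K.
  move=> x x_near; have -> : x = x0 - (x0 - x) by rewrite opprB addrC subrK.
  by apply: le_trans (ler_normB _ _) _; rewrite lerD2l.
have ratio_a : phi (tt u + a * g (tt u)) / phi (tt u) <=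
                phi (tt u + xx u * g (tt u)) / phi (tt u).
  apply: (Gamma_ratio_nonincr _ _ _ _ t_ge); last by rewrite /a; lra.
  by apply: K_ge; rewrite ler_norml; lra.
have ratio_b : phi (tt u + xx u * g (tt u)) / phi (tt u) <=
                phi (tt u + b * g (tt u)) / phi (tt u).
  apply: (Gamma_ratio_nonincr _ _ _ _ t_ge); last by rewrite /b; lra.
  by apply: K_ge; rewrite /b opprB addrC subrK gtr0_norm // ltW.
move: La Lb => /ltr_normlP[La_lb La_ub] /ltr_normlP[Lb_lb Lb_ub].
rewrite ltr_norml; lra.
Unshelve. all: by end_near. Qed.

Lemma arch_inv_scaled_lt (w x : R) : 0 < w -> expR (- (alpha * x)) < w ->
  \forall u \near 0^'+,
    arch_inv phi (u * w) < arch_inv phi u + x * g (arch_inv phi u).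
Proof.
move=> w_gt0 Lx_lt.
have ratio_lt := arch_inv_at0_cvgy _ (cvgr_lt _ (phi_Gamma x) _ Lx_lt).
near=> u.
have u_gt0 : 0 < u by near: u; apply: nbhs_right_gt.
have t_ge : t0 + `|x| * G <= arch_inv phi u.
  by near: u; move/cvgryPge : arch_inv_at0_cvgy; apply.
have phi_u : phi (arch_inv phi u) = u by near: u; exact: arch_invK_at0.
have phi_uw : phi (arch_inv phi (u * w)) = u * w by near: u; exact: arch_invK_scaled.
have phi_lt : phi (arch_inv phi u + x * g (arch_inv phi u)) < u * w.
  by rewrite [u * w]mulrC -ltr_pdivrMr // -[X in _ / X]phi_u; near: u; exact: ratio_lt.
rewrite ltNge; apply/negP => inv_le.
have := phi_nonincr _ _ (Gamma_shift_ge0 _ _ _ t_ge (lexx _)) inv_le.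
by rewrite phi_uw leNgt phi_lt.
Unshelve. all: by end_near. Qed.

Lemma arch_inv_scaled_gt (w x : R) : 0 < w -> w < expR (- (alpha * x)) ->
  \forall u \near 0^'+,
    arch_inv phi u + x * g (arch_inv phi u) < arch_inv phi (u * w).
Proof.
move=> w_gt0 Lx_gt.
have ratio_gt := arch_inv_at0_cvgy _ (cvgr_gt _ (phi_Gamma x) _ Lx_gt).
near=> u.
have u_gt0 : 0 < u by near: u; apply: nbhs_right_gt.
have phi_u : phi (arch_inv phi u) = u by near: u; exact: arch_invK_at0.
have phi_uw : phi (arch_inv phi (u * w)) = u * w by near: u; exact: arch_invK_scaled.
have phi_gt : u * w < phi (arch_inv phi u + x * g (arch_inv phi u)).
  by rewrite [u * w]mulrC -ltr_pdivlMr // -[X in _ / X]phi_u; near: u; exact: ratio_gt.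
rewrite ltNge; apply/negP => inv_le.
have := phi_nonincr _ _ (arch_inv_ge0 _) inv_le.
by rewrite phi_uw leNgt phi_gt.
Unshelve. all: by end_near. Qed.

Lemma arch_inv_increment (w : R) : 0 < alpha -> 0 < w ->
  (arch_inv phi (u * w) - arch_inv phi u) / g (arch_inv phi u)
    @[u --> 0^'+] --> - ln w / alpha.
Proof.
move=> alpha_gt0 w_gt0; apply/cvgrPdist_lt => e e_gt0.
have ae_gt0 : 0 < alpha * (e / 2) by rewrite mulr_gt0 // divr_gt0.
have alpha_shift x : alpha * (- ln w / alpha + x) = - ln w + alpha * x.
  by field; rewrite gt_eqF.
have La : expR (- (alpha * (- ln w / alpha + e / 2))) < w.
  by rewrite alpha_shift -[ltRHS]lnK ?posrE // ltr_expR; lra.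
have Lb : w < expR (- (alpha * (- ln w / alpha + - (e / 2)))).
  by rewrite alpha_shift -[ltLHS]lnK ?posrE // ltr_expR mulrN; lra.
have inv_lt := arch_inv_scaled_lt _ _ w_gt0 La.
have inv_gt := arch_inv_scaled_gt _ _ w_gt0 Lb.
near=> u.
have g_pos : 0 < g (arch_inv phi u) by apply/g_gt0/arch_inv_ge0.
have ub : (arch_inv phi (u * w) - arch_inv phi u) / g (arch_inv phi u) <
    - ln w / alpha + e / 2.
  by rewrite ltr_pdivrMr // ltrBlDl; near: u; exact: inv_lt.
have lb : - ln w / alpha + - (e / 2) <
    (arch_inv phi (u * w) - arch_inv phi u) / g (arch_inv phi u).
  by rewrite ltr_pdivlMr // ltrBrDl; near: u; exact: inv_gt.
rewrite ltr_norml; lra.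
Unshelve. all: by end_near. Qed.

Lemma arch_inv_mean_ratio (d : nat) (w : 'I_d -> R) :
  0 < alpha -> (0 < d)%N -> (forall i, 0 < w i) ->
  phi ((\sum_(i < d) arch_inv phi (u * w i)) / d%:R) / u @[u --> 0^'+] -->
    \prod_(i < d) w i `^ d%:R^-1.
Proof.
move=> alpha_gt0 d_gt0 w_gt0.
have d_neq0 : d%:R != 0 :> R by rewrite pnatr_eq0 -lt0n.
set x0 := (\sum_(i < d) - ln (w i) / alpha) / d%:R.
have mean_increment_cvg :
    (\sum_(i < d) (arch_inv phi (u * w i) - arch_inv phi u) / g (arch_inv phi u))
      / d%:R @[u --> 0^'+] --> x0.
  apply: cvgM; last exact: cvg_cst.
  apply: cvg_big => [|i _]; first exact: add_continuous.
  exact: arch_inv_increment.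
have -> : \prod_(i < d) w i `^ d%:R^-1 = expR (- (alpha * x0)).
  rewrite (eq_bigr (fun i => expR (d%:R^-1 * ln (w i)))); last first.
    by move=> i _; rewrite /powR gt_eqF.
  rewrite -expR_sum; congr expR.
  by rewrite /x0 -mulr_sumr -mulr_suml sumrN; field; rewrite d_neq0 gt_eqF.
apply: cvg_trans (Gamma_cvg_comp _ _ _ arch_inv_at0_cvgy mean_increment_cvg).
apply: near_eq_cvg; near=> u.
have g_pos : 0 < g (arch_inv phi u) by apply/g_gt0/arch_inv_ge0.
have -> : phi (arch_inv phi u) = u by near: u; exact: arch_invK_at0.
congr (phi _ / u).
rewrite -mulr_suml sumrB sumr_const card_ord -mulr_natr.
by field; rewrite d_neq0 gt_eqF.
Unshelve. all: by end_near. Qed.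

Lemma arch_copula_scaled_cvg (d : nat) (w : 'I_d -> R) (k tau : R) :
  0 < alpha -> (0 < d)%N -> (forall i, 0 < w i) ->
  phi (t * d%:R) / phi t `^ k @[t --> +oo] --> tau ->
  arch_copula phi (fun i => u * w i) / u `^ k @[u --> 0^'+] -->
    tau * \prod_(i < d) w i `^ (k / d%:R).
Proof.
move=> alpha_gt0 d_gt0 w_gt0 phi_tau.
have d_gt0R : 0 < d%:R :> R by rewrite ltr0n.
set m := fun u => (\sum_(i < d) arch_inv phi (u * w i)) / d%:R.
have m_ge0 u : 0 <= m u by rewrite divr_ge0 ?sumr_ge0 // => i _; exact: arch_inv_ge0.
have m_cvgy : m u @[u --> 0^'+] --> +oo.
  pose i0 := Ordinal d_gt0; apply/cvgryPge => A.
  have /cvgryPge/(_ (A * d%:R)) := arch_inv_scaled_cvgy _ (w_gt0 i0).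
  apply: filterS => u inv_ge; rewrite /m ler_pdivlMr // (bigD1 i0) //=.
  by rewrite (le_trans inv_ge) // lerDl sumr_ge0 // => i _; exact: arch_inv_ge0.
have -> : \prod_(i < d) w i `^ (k / d%:R) = (\prod_(i < d) w i `^ d%:R^-1) `^ k.
  rewrite prod_powR => [|i]; last exact: powR_ge0.
  by apply: eq_bigr => i _; rewrite mulrC powRrM.
have prod_gt0 : 0 < \prod_(i < d) w i `^ d%:R^-1.
  by apply: prodr_gt0 => i _; exact: powR_gt0.
have mean_cvg := arch_inv_mean_ratio _ _ alpha_gt0 d_gt0 w_gt0.
apply: cvg_trans (cvgM (cvg_comp _ _ m_cvgy phi_tau)
  (cvg_powR _ _ k prod_gt0 mean_cvg)).
apply: near_eq_cvg; near=> u.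
have u_gt0 : 0 < u by near: u; apply: nbhs_right_gt.
have phim_gt0 : 0 < phi (m u) := phi_gt0 _ (m_ge0 u).
have phim_split : phi (m u) `^ k = (phi (m u) / u) `^ k * u `^ k.
  by rewrite -powRM ?divfK ?gt_eqF // divr_ge0 // ltW.
rewrite /= -/(m u) /arch_copula asboolT => [|i]; last by rewrite mulr_gt0.
rewrite -(divfK (lt0r_neq0 d_gt0R) (\sum_i _)) -/(m u) phim_split.
have := powR_gt0 k u_gt0; have := powR_gt0 k (divr_gt0 phim_gt0 u_gt0).
by move=> ? ?; field; rewrite !gt_eqF.
Unshelve. all: by end_near. Qed.

End ArchimedeanGenerator.

Lemma arch_copula_eq0 (R : realType) (d : nat) (phi : R -> R)
    (v : 'I_d -> R) (i : 'I_d) :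
  v i <= 0 -> arch_copula phi v = 0.
Proof.
by move=> vi_le0; rewrite /arch_copula asboolF // => /(_ i); rewrite ltNge vi_le0.
Qed.

Theorem theorem3p3 (R : realType) (d : nat) (phi g : R -> R) (alpha k tau : R)
  (w : 'I_d -> R) :
  (2 <= d)%N ->
  laplace_transform_pos phi ->
  (forall t, 0 <= t -> 0 <= phi t <= 1) ->
  {within `[0, +oo[, continuous phi} ->
  (forall s t, 0 <= s -> s < t -> phi t < phi s) ->
  phi 0 = 1 ->
  phi t @[t --> +oo] --> 0 ->
  0 < alpha ->
  (forall t, 0 <= t -> 0 < g t) ->
  measurable_fun (`[0, +oo[%classic : set R) g ->
  ult_decreasing g ->
  Gamma_class alpha g phi ->
  1 <= k -> k <= d%:R ->
  0 < tau ->
  (phi (t * d%:R) / phi t `^ k) @[t --> +oo] --> tau ->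
  (forall i, 0 <= w i) ->
  (arch_copula phi (fun i => u * w i) / u `^ k) @[u --> 0^'+] -->
    tau * \prod_(i < d) w i `^ (k / d%:R).
Proof.
move=> d_ge2 _ phi01 phi_cont phi_decr phi0 phi_cvgy alpha_gt0 g_gt0 _
  [t1 g_decr] [_ phi_Gamma] k_ge1 _ _ phi_tau w_ge0.
have d_gt0 : (0 < d)%N by apply: leq_trans d_ge2.
have phi_nonincr s t : 0 <= s -> s <= t -> phi t <= phi s.
  by move=> s_ge0; rewrite le_eqVlt => /predU1P[-> // | /(phi_decr _ _ s_ge0)/ltW].
have phi_gt0 t : 0 <= t -> 0 < phi t.
  move=> t_ge0; have /andP[+ _] := phi01 (t + 1) (addr_ge0 t_ge0 ler01).
  by move/le_lt_trans; apply; apply: phi_decr => //; rewrite ltrDl.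
pose t0 := Num.max t1 0.
have t0_ge0 : 0 <= t0 by rewrite le_max lexx orbT.
have g_le t : t0 <= t -> g t <= g t0.
  by move=> t0_le; apply: g_decr => //; rewrite le_max lexx.
have [/forallP w_gt0 | /forallPn[i /negP wi_ngt0]] := boolP [forall i, 0 < w i].
  by apply: (arch_copula_scaled_cvg _ _ phi_cont phi0 phi_cvgy phi_nonincr phi_gt0
    _ _ _ _ t0_ge0 g_gt0 g_le phi_Gamma).
have wi0 : w i = 0 by apply: le_anti; rewrite w_ge0 andbT leNgt; exact/negP.
rewrite (bigD1 i) //= wi0 powR0 ?mul0r ?mulr0; last first.
  by rewrite mulf_neq0 ?invr_eq0 ?pnatr_eq0 -?lt0n // gt_eqF // (lt_le_trans ltr01).
under eq_fun => u do rewrite (@arch_copula_eq0 _ _ _ _ i) ?wi0 ?mulr0 // mul0r.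
exact: cvg_cst.
Qed.
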